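(* For every positive integer $n$, the domination polynomial of the book graph $B_n$ is $$D(B_n,x)=(x^2+2x)^n(2x+1)+x^2(x+1)^{2n}-2x^n.$$ *)

From HB Require Import structures.
From mathcomp Require Import all_boot all_order all_algebra.
Set Implicit Arguments. Unset Strict Implicit. Unset Printing Implicit Defensive.
Import GRing.Theory.
Local Open Scope ring_scope.

Definition dominating (V : finType) (adj : rel V) (S : {set V}) : bool :=
  [forall v, (v \in S) || [exists u in S, adj u v]].

Definition dom_poly (V : finType) (adj : rel V) : {poly int} :=
  \sum_(S : {set V} | dominating adj S) 'X^#|S|.

(* Star K_{1,n}: vertex None is the centre, Some i (i < n) are the leaves. *)
Definition star_adj (n : nat) : rel (option 'I_n) :=
  fun x y => ((x == None) && (y != None)) || ((y == None) && (x != None)).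

Definition K2_adj : rel bool := fun a b => a != b.

Definition cart_adj (A B : finType) (ra : rel A) (rb : rel B) : rel (A * B) :=
  fun u v => ((u.1 == v.1) && rb u.2 v.2) || ((u.2 == v.2) && ra u.1 v.1).

(* Book graph B_n = K_{1,n} x K_2 (n 4-cycles sharing a common edge). *)
Definition book_adj (n : nat) : rel (option 'I_n * bool) :=
  cart_adj (@star_adj n) K2_adj.

From HB Require Import structures.
From mathcomp Require Import all_boot all_order all_algebra.
From mathcomp Require Import ring.
Import GRing.Theory.
Local Open Scope ring_scope.

(* The book graph B_n has two spine vertices (None, c) and, for every page
   i < n, two page vertices (Some i, c), where c : bool says on which side of
   the common edge a vertex lies.  A vertex set S is thus the same thing as a
   configuration (s, f): a pair of booleans s for the spine and a pair f i for
   every page.  In these terms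
   - x^|S| factors as a weight of s times a product of weights of the f i;
   - S is dominating iff (each side c of the spine is hit: s is nonempty or
     some page meets side c) and (each page is nonempty or its neighbour on
     the spine lies in S).
   Summing over s first, the conditions on f become "every page satisfies Q"
   for some Q, so the sum over f factors into an n-th power (sum_ffun_forall);
   only for the empty spine the two "side hit" conditions remain, which are
   removed by inclusion-exclusion.  The four spine cases contribute
   x^2 (x+1)^(2n), x (x^2+2x)^n twice, and (x^2+2x)^n - 2 x^n. *)

Lemma sum_ffun_forall (I A : finType) (R : comPzSemiRingType) (Q : pred A) (w : A -> R) :
  \sum_(f : {ffun I -> A} | [forall i, Q (f i)]) \prod_i w (f i)
  = (\sum_(a | Q a) w a) ^+ #|I|.
Proof.
rewrite -prodr_const big_mkcond /=; under [RHS]eq_bigr do rewrite big_mkcond.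
rewrite bigA_distr_bigA; apply: eq_bigr => f _ /=.
have [/forallP allQ | notallQ] := boolP [forall i, Q (f i)].
  by apply: eq_bigr => i _; rewrite allQ.
have [i /negbTE Qi] : exists i, ~~ Q (f i) by apply/existsP; rewrite -negb_forall.
by rewrite (bigD1 i) //= Qi mul0r.
Qed.

Lemma big_option (I : finType) (R : Type) (idx : R) (op : Monoid.com_law idx)
    (F : option I -> R) :
  \big[op/idx]_(o : option I) F o = op (F None) (\big[op/idx]_(i : I) F (Some i)).
Proof.
rewrite (bigD1 None) //=; congr (op _ _).
rewrite (@reindex_omap _ _ _ _ _ Some (fun o => o)) /=; last by case.
by apply: eq_bigl => i; rewrite eqxx.
Qed.

Lemma big_pair (I J : finType) (R : Type) (idx : R) (op : Monoid.com_law idx)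
    (F : I * J -> R) :
  \big[op/idx]_(p : I * J) F p = \big[op/idx]_(i : I) \big[op/idx]_(j : J) F (i, j).
Proof. by rewrite pair_bigA; apply: eq_bigr => -[]. Qed.

Lemma indicator_remove2 (V : zmodType) (a b1 b2 : bool) (W : V) :
  (b1 -> a) -> (b2 -> a) -> ~~ (b1 && b2) ->
  (if [&& a, ~~ b1 & ~~ b2] then W else 0)
  = (if a then W else 0) - (if b1 then W else 0) - (if b2 then W else 0).
Proof.
case: a; case: b1; case: b2 => //= b1a b2a _;
  by [rewrite ?subr0 ?subrr | have := b1a isT | have := b2a isT].
Qed.

Definition side (p : bool * bool) (c : bool) : bool := if c then p.2 else p.1.

Definition nonempty_pair (p : bool * bool) : bool := p != (false, false).

Lemma side_either (p : bool * bool) (c : bool) :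
  side p c || side p (~~ c) = nonempty_pair p.
Proof. by case: p => [[] []]; case: c. Qed.

Definition wt (p : bool * bool) : {poly int} :=
  \prod_(c : bool) (if side p c then 'X else 1).

Lemma sum_wt_pairs (P : pred (bool * bool)) :
  \sum_(p | P p) wt p
  = (if P (true, true) then 'X * 'X else 0) + (if P (true, false) then 'X else 0)
    + ((if P (false, true) then 'X else 0) + (if P (false, false) then 1 else 0)).
Proof.
rewrite big_mkcond big_pair !big_bool /wt !big_bool /= !mul1r !mulr1.
by rewrite [_ * 'X]mulrC.
Qed.

Section BookGraph.
Variable n : nat.

Local Notation vertex := (option 'I_n * bool)%type.
Local Notation pages := {ffun 'I_n -> bool * bool}.
Local Notation config := ((bool * bool) * pages)%type.

Lemma book_adj_spine (u : vertex) (c : bool) :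
  book_adj u (None, c) = (u == (None, ~~ c)) || ((u.1 != None) && (u.2 == c)).
Proof. by case: u => [[i|] []]; case: c. Qed.

Lemma book_adj_page (u : vertex) (i : 'I_n) (c : bool) :
  book_adj u (Some i, c) = (u == (Some i, ~~ c)) || (u == (None, c)).
Proof.
case: u => [[j|] d]; rewrite /book_adj /cart_adj /star_adj /K2_adj /= !xpair_eqE.
  by rewrite andbF !orbF; case: d; case: c.
by rewrite andbT.
Qed.

Lemma spine_neighbour_in (S : {set vertex}) (c : bool) :
  [exists u in S, book_adj u (None, c)]
  = ((None, ~~ c) \in S) || [exists i, (Some i, c) \in S].
Proof.
apply/existsP/orP => [[[[i|] d]]|[Sc | /existsP [i Si]]].
- rewrite book_adj_spine /= => /andP [Sv /eqP dc]; right.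
  by apply/existsP; exists i; rewrite -dc.
- by rewrite book_adj_spine /= orbF => /andP [Sv /eqP <-]; left.
- by exists (None, ~~ c); rewrite Sc book_adj_spine eqxx.
- by exists (Some i, c); rewrite Si book_adj_spine /= eqxx ?orbT.
Qed.

Lemma page_neighbour_in (S : {set vertex}) (i : 'I_n) (c : bool) :
  [exists u in S, book_adj u (Some i, c)]
  = ((Some i, ~~ c) \in S) || ((None, c) \in S).
Proof.
apply/existsP/orP => [[u /andP [Su]]|[Sv | Sv]].
- by rewrite book_adj_page => /orP [] /eqP uE; rewrite -uE Su; [left | right].
- by exists (Some i, ~~ c); rewrite Sv book_adj_page eqxx.
- by exists (None, c); rewrite Sv book_adj_page eqxx orbT.
Qed.

Definition cfg_set (x : config) : {set vertex} :=
  [set v | side (if v.1 is Some i then x.2 i else x.1) v.2].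

Definition set_cfg (S : {set vertex}) : config :=
  (((None, false) \in S, (None, true) \in S),
   [ffun i => ((Some i, false) \in S, (Some i, true) \in S)]).

Lemma cfg_set_bij : bijective cfg_set.
Proof.
exists set_cfg.
- case=> [[a b] f]; rewrite /set_cfg !inE /=; congr (_, _, _).
  by apply/ffunP => i; rewrite ffunE !inE /=; case: (f i).
- by move=> S; apply/setP => [[[i|] []]]; rewrite inE /= ?ffunE.
Qed.

Lemma weight_cfg_set (s : bool * bool) (f : pages) :
  'X^#|cfg_set (s, f)| = wt s * \prod_i wt (f i).
Proof.
rewrite -prodr_const big_mkcond /= big_pair big_option.
rewrite /wt; congr (_ * _); last apply: eq_bigr => i _;
  by apply: eq_bigr => c _; rewrite inE.
Qed.

Definition dom_cfg (s : bool * bool) (f : pages) : bool :=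
  [forall c, nonempty_pair s || [exists i, side (f i) c]] &&
  [forall i, forall c, nonempty_pair (f i) || side s c].

Lemma dominating_cfg_set (s : bool * bool) (f : pages) :
  dominating (@book_adj n) (cfg_set (s, f)) = dom_cfg s f.
Proof.
set S := cfg_set (s, f).
have spine c : ((None, c) \in S) || [exists u in S, book_adj u (None, c)]
               = nonempty_pair s || [exists i, side (f i) c].
  rewrite spine_neighbour_in !inE /= orbA side_either.
  by under eq_existsb do rewrite inE.
have page i c : ((Some i, c) \in S) || [exists u in S, book_adj u (Some i, c)]
                = nonempty_pair (f i) || side s c.
  by rewrite page_neighbour_in !inE /= orbA side_either.
apply/forallP/andP => [dom | [/forallP dspine /forallP dpage] [[i|] c]].
- split; first by apply/forallP => c; rewrite -spine dom.
  by apply/forallP => i; apply/forallP => c; rewrite -page dom.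
- by rewrite page; move/forallP: (dpage i).
- by rewrite spine dspine.
Qed.

Lemma dom_poly_book_cfg :
  dom_poly (@book_adj n) =
  \sum_(s : bool * bool) wt s * \sum_(f | dom_cfg s f) \prod_i wt (f i).
Proof.
rewrite /dom_poly (reindex cfg_set); last exact/onW_bij/cfg_set_bij.
rewrite big_mkcond [LHS]big_pair; apply: eq_bigr => s _.
rewrite mulr_sumr [RHS]big_mkcond; apply: eq_bigr => f _.
by rewrite dominating_cfg_set weight_cfg_set; case: ifP; rewrite ?mulr0.
Qed.

Lemma pages_full_spine (f : pages) : dom_cfg (true, true) f = true.
Proof. by apply/andP; split; apply/forallP => // i; apply/forallP => -[]; rewrite orbT. Qed.

(* With exactly one spine vertex in S, the pages must all be nonempty: the
   page vertex on the other side sees no spine vertex of S. *)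
Lemma pages_half_spine (s : bool * bool) (f : pages) :
  s.1 != s.2 -> dom_cfg s f = [forall i, nonempty_pair (f i)].
Proof.
case: s => a b /= ab; have nz : nonempty_pair (a, b) by case: a b ab => [] [].
have allT : [forall c : bool, true] by apply/forallP.
rewrite /dom_cfg nz /= allT /=; apply: eq_forallb => i.
apply/forallP/idP => [/(_ a)|ne c]; last by rewrite ne.
by case: a b ab {nz} => [] [] //=; rewrite orbF.
Qed.

(* With an empty spine, the pages must be nonempty and must meet both sides;
   failing the latter means all pages are the same one-element pair. *)
Lemma pages_empty_spine (f : pages) :
  dom_cfg (false, false) f =
  [&& [forall i, nonempty_pair (f i)],
      ~~ [forall i, f i == (false, true)] & ~~ [forall i, f i == (true, false)]].
Proof.
rewrite /dom_cfg /= andbC.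
have -> : [forall i, forall c, nonempty_pair (f i) || side (false, false) c]
          = [forall i, nonempty_pair (f i)].
  by apply: eq_forallb => i; apply/forallP/idP => [/(_ false)|ne []]; rewrite orbF.
have [/forallP ne|] //= := boolP [forall i, nonempty_pair (f i)].
have miss c : ~~ [exists i, side (f i) c] = [forall i, f i == (c, ~~ c)].
  rewrite negb_exists; apply: eq_forallb => i; move: (ne i).
  by rewrite /nonempty_pair; case: (f i) => [[] []]; case: c.
apply/forallP/andP => [hit | [not_all_left not_all_right] c].
  by split; [rewrite -(miss false) | rewrite -(miss true)]; rewrite negbK hit.
by rewrite -[[exists i, _]]negbK miss; case: c.
Qed.

Lemma sum_all_pages : \sum_(f : pages) \prod_i wt (f i) = ('X + 1) ^+ (2 * n).
Proof.
transitivity (\sum_(f : pages | [forall i, predT (f i)]) \prod_i wt (f i)).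
  by apply: eq_bigl => f; apply/esym/forallP.
rewrite sum_ffun_forall card_ord sum_wt_pairs /= exprM; congr (_ ^+ _); ring.
Qed.

Lemma sum_nonempty_pages :
  \sum_(f : pages | [forall i, nonempty_pair (f i)]) \prod_i wt (f i)
  = ('X^2 + 2%:R *: 'X) ^+ n.
Proof.
rewrite sum_ffun_forall card_ord sum_wt_pairs /= -mul_polyC polyC_natr.
by congr (_ ^+ _); ring.
Qed.

Lemma sum_constant_pages (p0 : bool * bool) :
  \sum_(f : pages | [forall i, f i == p0]) \prod_i wt (f i) = wt p0 ^+ n.
Proof. by rewrite (sum_ffun_forall _ _ _ (pred1 p0)) card_ord big_pred1_eq. Qed.

(* Inclusion-exclusion: the two excluded events (all pages equal to
   (false, true), resp. to (true, false)) are disjoint since n > 0. *)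
Lemma sum_pages_empty_spine (hn : (0 < n)%N) :
  \sum_(f | dom_cfg (false, false) f) \prod_i wt (f i)
  = ('X^2 + 2%:R *: 'X) ^+ n - 'X^n - 'X^n.
Proof.
have const_nonempty p0 (f : pages) : nonempty_pair p0 ->
    [forall i, f i == p0] -> [forall i, nonempty_pair (f i)].
  by move=> ne /forallP eq0; apply/forallP => i; rewrite (eqP (eq0 i)).
have disjoint (f : pages) :
    ~~ ([forall i, f i == (false, true)] && [forall i, f i == (true, false)]).
  apply/negP => /andP [/forallP/(_ (Ordinal hn))/eqP fi /forallP/(_ (Ordinal hn))].
  by rewrite fi.
rewrite big_mkcond /=.
under eq_bigr => f _ do rewrite pages_empty_spine (indicator_remove2 _ _ _ _ _
  (const_nonempty (false, true) f isT) (const_nonempty (true, false) f isT) (disjoint f)).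
rewrite !sumrB -!big_mkcond sum_nonempty_pages !sum_constant_pages.
by rewrite /wt !big_bool /= mul1r mulr1.
Qed.

End BookGraph.

Theorem mainTheorem5 (n : nat) (hn : (0 < n)%N) :
  dom_poly (@book_adj n) =
    ('X^2 + 2%:R *: 'X) ^+ n * (2%:R *: 'X + 1)
    + 'X^2 * ('X + 1) ^+ (2 * n)
    - 2%:R *: 'X^n :> {poly int}.
Proof.
rewrite dom_poly_book_cfg big_pair !big_bool /=.
rewrite (eq_bigl _ _ (pages_full_spine n)) sum_all_pages.
rewrite (eq_bigl _ _ (@pages_half_spine n (true, false) ^~ isT)).
rewrite (eq_bigl _ _ (@pages_half_spine n (false, true) ^~ isT)).
rewrite sum_nonempty_pages sum_pages_empty_spine //.
rewrite /wt !big_bool /= -!mul_polyC !polyC_natr; ring.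
Qed.
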